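(* Every fragile graph $G$ with $|V(G)|\geq 4$ satisfies $|E(G)|\leq 2.5|V(G)|-5$. Consequently every non-null fragile graph has a vertex of degree at most $4$.
   Context: All graphs are finite and simple. A graph is $k$-connected if it has at least $k+1$ vertices and no vertex cutset with at most $k-1$ vertices. A graph is fragile if it has no $3$-connected subgraph. *)

(* A finite simple graph is (T, e) with T : finType and
   e : rel T symmetric and irreflexive; V(G) = T. *)
From mathcomp Require Import all_boot.
Set Implicit Arguments. Unset Strict Implicit. Unset Printing Implicit Defensive.

Section Graphs.
Variable T : finType.

Definition connected_on (W : {set T}) (f : rel T) : Prop :=
  forall x y, x \in W -> y \in W ->
    connect [rel u v | [&& f u v, u \in W & v \in W]] x y.

Definition k_connected (k : nat) (S : {set T}) (f : rel T) : Prop :=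
  k.+1 <= #|S| /\
  forall X : {set T}, X \subset S -> #|X| <= k.-1 -> connected_on (S :\: X) f.

Definition is_subgraph (e : rel T) (S : {set T}) (f : rel T) : Prop :=
  symmetric f /\ (forall x y, f x y -> [&& e x y, x \in S & y \in S]).

Definition fragile (e : rel T) : Prop :=
  ~ exists (S : {set T}) (f : rel T), is_subgraph e S f /\ k_connected 3 S f.

Definition edge_set (e : rel T) : {set {set T}} :=
  [set [set x; y] | x in T, y in T & e x y].

Definition degree (e : rel T) (v : T) : nat := #|[set u | e v u]|.

End Graphs.

(** Induction on the vertex set of an induced subgraph.  A fragile graph on
    at least four vertices is not 3-connected, so it splits as the union of
    two proper induced subgraphs [G[S1]], [G[S2]] meeting in a set [X] of at
    most two vertices, with no edge between [S1 \ X] and [S2 \ X].  Then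
    [|V| = |S1| + |S2| - |X|] and [|E| = |E(S1)| + |E(S2)| - |E(X)|], and the
    bound [2|E| + 10 <= 5|V|] follows from the bounds for the two sides, where
    a side with fewer than four vertices is estimated by [C(n, 2)]. When
    [|X| = 2] and [X] is not an edge, that estimate improves by one edge,
    which is exactly what the three-vertex case needs.  The degree statement
    is the handshake lemma. *)

From Stdlib Require Import Classical.
From mathcomp Require Import all_boot.
From mathcomp Require Import zify.

Set Implicit Arguments.
Unset Strict Implicit.
Unset Printing Implicit Defensive.

Section ConnectedOn.
Variable T : finType.

Lemma not_connected_on_split (W : {set T}) (f : rel T) :
  ~ connected_on W f ->
  exists A : {set T}, [/\ A \subset W, A != set0, W :\: A != set0 &
    forall u v, u \in A -> v \in W :\: A -> ~~ f u v].
Proof.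
pose r := [rel u v | [&& f u v, u \in W & v \in W]].
move=> disconn; have [x [y [xW yW nxy]]] :
    exists x y, [/\ x \in W, y \in W & ~~ connect r x y].
  apply: NNPP => conn; apply: disconn => x y xW yW.
  by apply/negPn/negP => nxy; apply: conn; exists x, y.
exists [set z in W | connect r x z]; split.
- by apply/subsetP => z; rewrite inE => /andP [].
- by apply/set0Pn; exists x; rewrite inE xW connect0.
- by apply/set0Pn; exists y; rewrite !inE yW /= andbT.
move=> u v; rewrite !inE => /andP [uW xu] /andP [vA vW].
apply/negP => fuv; move: vA; rewrite vW /= => /negP; apply.
by apply: connect_trans xu (connect1 _); rewrite /= fuv uW vW.
Qed.

End ConnectedOn.

Section FragileGraphs.
Variable T : finType.
Variable e : rel T.
Hypothesis e_sym : symmetric e.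
Hypothesis e_irr : irreflexive e.

Definition edges_in (S : {set T}) : {set {set T}} :=
  [set E in edge_set e | E \subset S].

Lemma edge_setP (E : {set T}) :
  reflect (exists x y, e x y /\ E = [set x; y]) (E \in edge_set e).
Proof.
apply: (iffP imset2P) => [[x y _] | [x [y [exy ->]]]].
  by rewrite inE => exy ->; exists x, y.
by exists x y; rewrite ?inE.
Qed.

Lemma edges_in_draws (S : {set T}) :
  edges_in S \subset [set A : {set T} | A \subset S & #|A| == 2].
Proof.
apply/subsetP => E; rewrite !inE => /andP [/edge_setP [x [y [exy ->]]] ->].
have xy : x != y by apply: contraTneq exy => ->; rewrite e_irr.
by rewrite cards2 xy.
Qed.

(* The non-edges of [G[X]] are non-edges of [G[S]]. *)
Lemma card_edges_in_sub (X S : {set T}) : X \subset S ->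
  #|edges_in S| + 'C(#|X|, 2) <= 'C(#|S|, 2) + #|edges_in X|.
Proof.
move=> XS; rewrite -!cards_draws.
set PX := [set A : {set T} | A \subset X & _].
set PS := [set A : {set T} | A \subset S & _].
have nonedges : PX :\: edges_in X \subset PS :\: edges_in S.
  apply/subsetP => A; rewrite !inE => /andP [nAX /andP [AX ->]].
  by rewrite (subset_trans AX XS) !andbT; rewrite AX andbT in nAX.
have := subset_leq_card nonedges.
rewrite !cardsDS ?edges_in_draws //.
have := subset_leq_card (edges_in_draws S).
set eS := #|edges_in S|; set eX := #|edges_in X|; set pS := #|PS|; set pX := #|PX|.
lia.
Qed.

Lemma card_edges_in (S : {set T}) : #|edges_in S| <= 'C(#|S|, 2).
Proof. by rewrite -cards_draws subset_leq_card ?edges_in_draws. Qed.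

Lemma edges_in_setI (S1 S2 : {set T}) :
  edges_in (S1 :&: S2) = edges_in S1 :&: edges_in S2.
Proof. by apply/setP => E; rewrite !inE subsetI andbACA andbb. Qed.

Definition separation (S1 S2 : {set T}) : Prop :=
  [/\ ~~ (S1 \subset S2), ~~ (S2 \subset S1) &
      forall u v, u \in S1 :\: S2 -> v \in S2 :\: S1 -> ~~ e u v].

Lemma edges_in_setU (S1 S2 : {set T}) : separation S1 S2 ->
  edges_in (S1 :|: S2) = edges_in S1 :|: edges_in S2.
Proof.
case=> _ _ no_cross; apply/setP => E; rewrite !inE.
case: (edge_setP E) => [[u [v [euv ->]]] | _] //=.
rewrite !subUset !sub1set !inE.
have cross x y : e x y -> (x \in S1) && (y \in S2) ==> (x \in S2) || (y \in S1).
  move=> exy; apply/implyP => /andP [x1 y2]; apply/negPn/negP => /norP [x2 y1].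
  by have := no_cross x y; rewrite !inE x1 x2 y1 y2 exy => /(_ isT isT).
have := cross u v euv; have := cross v u; rewrite e_sym euv => /(_ isT).
by case: (u \in S1); case: (u \in S2); case: (v \in S1); case: (v \in S2).
Qed.

Lemma fragile_cut (S : {set T}) : fragile e -> 4 <= #|S| ->
  exists X : {set T}, [/\ X \subset S, #|X| <= 2 & ~ connected_on (S :\: X) e].
Proof.
move=> frag S4; pose f := [rel u v | [&& e u v, u \in S & v \in S]].
apply: NNPP => no_cut; apply: frag; exists S, f; split.
  split=> [u v | u v /and3P [-> -> ->] //].
  by rewrite /= e_sym; case: (u \in S); case: (v \in S); rewrite ?andbT ?andbF.
split=> // X XS X2; apply: NNPP => nconn; apply: no_cut; exists X; split=> //.
move=> conn; apply: nconn => x y xW yW.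
(* Inside [S :\: X] the restriction of [e] to [S] is [e] itself. *)
rewrite (@eq_connect _ _ [rel u v | [&& e u v, u \in S :\: X & v \in S :\: X]]) ?conn //.
move=> u v /=; case uW: (u \in S :\: X); case vW: (v \in S :\: X); rewrite ?andbF //.
by move: uW vW; rewrite !inE => /andP [_ ->] /andP [_ ->]; rewrite !andbT.
Qed.

Lemma separation_of_cut (S X A : {set T}) :
  X \subset S -> A \subset S :\: X -> A != set0 -> S :\: X :\: A != set0 ->
  (forall u v, u \in A -> v \in S :\: X :\: A -> ~~ e u v) ->
  [/\ (A :|: X) :|: (S :\: A) = S, separation (A :|: X) (S :\: A)
     & (A :|: X) :&: (S :\: A) = X].
Proof.
move=> XS AW nA nB noAB.
(* Given these two implications, each set identity below is a truth table. *)
have memS z : ((z \in A) ==> (z \in S) && (z \notin X)) && ((z \in X) ==> (z \in S)).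
  apply/andP; split; apply/implyP; last exact: (subsetP XS).
  by move/(subsetP AW); rewrite inE andbC.
have setE (P Q : {set T}) (eqPQ : forall z, (z \in A) ==> (z \in S) && (z \notin X) ->
    (z \in X) ==> (z \in S) -> (z \in P) = (z \in Q)) : P = Q.
  by apply/setP => z; have /andP [] := memS z; apply: eqPQ.
have S1D : (A :|: X) :\: (S :\: A) = A.
  by apply: setE => z; rewrite !inE; case: (z \in A); case: (z \in X); case: (z \in S).
have S2D : (S :\: A) :\: (A :|: X) = S :\: X :\: A.
  by apply: setE => z; rewrite !inE; case: (z \in A); case: (z \in X); case: (z \in S).
split.
- by apply: setE => z; rewrite !inE; case: (z \in A); case: (z \in X); case: (z \in S).
- by split; rewrite -?setD_eq0 ?S1D ?S2D.
- by apply: setE => z; rewrite !inE; case: (z \in A); case: (z \in X); case: (z \in S).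
Qed.

Lemma fragile_separation (S : {set T}) : fragile e -> 4 <= #|S| ->
  exists S1 S2, [/\ S1 :|: S2 = S, separation S1 S2 & #|S1 :&: S2| <= 2].
Proof.
move=> frag S4; have [X [XS X2 /not_connected_on_split [A [AW nA nB noAB]]]] :=
  fragile_cut frag S4.
have [defS sep defX] := separation_of_cut XS AW nA nB noAB.
by exists (A :|: X), (S :\: A); rewrite defX.
Qed.

Definition sparse (S : {set T}) : Prop :=
  4 <= #|S| -> 2 * #|edges_in S| + 10 <= 5 * #|S|.

(* The bound that one side [S] of a separation with separator [X] contributes;
   it is twice the natural one so that [|X| = 1] needs no rounding. *)
Lemma sparse_side_bound (X S : {set T}) :
  X \subset S -> #|X| < #|S| -> #|X| <= 2 -> sparse S ->
  4 * #|edges_in S| + 20 + 5 * #|X| <= 10 * #|S| + 10 + 2 * #|edges_in X|.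
Proof.
move=> XS ltXS X2 spS; have [/spS | S3] := leqP 4 #|S|; first by lia.
move: (card_edges_in_sub XS) (card_edges_in X) ltXS X2 S3.
rewrite !bin2; case: #|S| => [|[|[|[|n]]]]; case: #|X| => [|[|[|k]]] //=; lia.
Qed.

Lemma sparse_separation (S1 S2 : {set T}) :
  separation S1 S2 -> #|S1 :&: S2| <= 2 -> sparse S1 -> sparse S2 ->
  2 * #|edges_in (S1 :|: S2)| + 10 <= 5 * #|S1 :|: S2|.
Proof.
move=> sep X2 sp1 sp2; have [n12 n21 _] := sep.
have := sparse_side_bound (subsetIl S1 S2) (proper_card (properIl n12)) X2 sp1.
have := sparse_side_bound (subsetIr S1 S2) (proper_card (properIr n21)) X2 sp2.
have := cardsUI S1 S2; have := cardsUI (edges_in S1) (edges_in S2).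
rewrite -edges_in_setU // -edges_in_setI; lia.
Qed.

Lemma fragile_sparse S : fragile e -> sparse S.
Proof.
move=> frag; have [n] := ubnP #|S|; elim: n S => // n IH S ltSn S4.
have [S1 [S2 [defS sep X2]]] := fragile_separation frag S4.
have [n12 n21 _] := sep; rewrite -defS ltnS in ltSn *.
apply: sparse_separation sep X2 _ _; apply: IH.
- exact: leq_trans (proper_card (properUl n21)) ltSn.
- exact: leq_trans (proper_card (properUr n12)) ltSn.
Qed.

Lemma degree_edge_set v : degree e v = #|[set E in edge_set e | v \in E]|.
Proof.
have -> : [set E in edge_set e | v \in E] = [set [set v; u] | u in [set u | e v u]].
  apply/setP => E; rewrite inE; apply/andP/imsetP => [[]|[u]].
    case/edge_setP=> [x [y [exy ->]]]; rewrite !inE => /orP [] /eqP ->.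
      by exists y; rewrite ?inE.
    by exists x; rewrite ?inE 1?e_sym // setUC.
  rewrite inE => evu ->; split; last by rewrite !inE eqxx.
  by apply/edge_setP; exists v, u.
rewrite card_in_imset // => x y; rewrite !inE => evx _ /setP /(_ x).
rewrite !inE eqxx orbT => /esym /orP [/eqP xv | /eqP //].
by move: evx; rewrite xv e_irr.
Qed.

Lemma handshake : \sum_v degree e v = 2 * #|edge_set e|.
Proof.
have deg v : degree e v = \sum_(E in edge_set e | v \in E) 1.
  by rewrite degree_edge_set -sum1_card big_set.
under eq_bigr do rewrite deg.
rewrite mulnC -sum_nat_const (exchange_big_dep (mem (edge_set e))) /=; last first.
  by move=> v E _ /andP [].
apply: eq_bigr => E /[dup] /edge_setP [x [y [exy ->]]] ->.
have xy : x != y by apply: contraTneq exy => ->; rewrite e_irr.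
by rewrite sum1_card cards2 xy.
Qed.

End FragileGraphs.

Theorem mainTheorem3 (T : finType) (e : rel T) :
  symmetric e -> irreflexive e -> fragile e ->
  (4 <= #|T| -> 2 * #|edge_set e| <= 5 * #|T| - 10) /\
  (0 < #|T| -> exists v : T, degree e v <= 4).
Proof.
move=> e_sym e_irr frag.
have edges_bound : 4 <= #|T| -> 2 * #|edge_set e| <= 5 * #|T| - 10.
  have -> : edge_set e = edges_in e [set: T].
    by apply/setP => E; rewrite inE subsetT andbT.
  by rewrite -cardsT => /(fragile_sparse e_sym e_irr frag); lia.
split=> // T_gt0; have [T4 | T3] := leqP 4 #|T|.
  apply/existsP; apply: contraT; rewrite negb_exists => /forallP deg_gt4.
  have : \sum_(v : T) 5 <= \sum_v degree e v.
    by apply: leq_sum => v _; rewrite leqNgt deg_gt4.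
  rewrite handshake // sum_nat_const; change #|xpredT| with #|T|.
  by have := edges_bound T4; lia.
case/card_gt0P: T_gt0 => v _; exists v.
by apply: leq_trans (max_card _) _; lia.
Qed.
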